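(* Let $p$ be a fixed odd prime. For every $\epsilon>0$ there exists $c>0$ such that for every $n$, if $f:\mathbb{F}_p^n\to[-1,1]$ satisfies $\|f\|_{U^2}\le c$, $a\in[-1,1]$ is a constant, and $g(x)=a+f(x)$ for every $x\in\mathbb{F}_p^n$, then $\bigl|\|g\|_{U^3}^8-(a^8+\|f\|_{U^3}^8)\bigr|\le\epsilon$.
   Context: For real-valued $f$ on $\mathbb{F}_p^n$ and $k\ge2$, $\|f\|_{U^k}^{2^k}=\mathbb{E}_{x,h_1,\dots,h_k\in\mathbb{F}_p^n}\prod_{\omega\in\{0,1\}^k}f(x+\omega_1h_1+\dots+\omega_kh_k)$ (uniform averages). *)

From HB Require Import structures.
From mathcomp Require Import all_boot all_order all_algebra.
From mathcomp Require Import reals.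
Set Implicit Arguments. Unset Strict Implicit. Unset Printing Implicit Defensive.
Import Order.TTheory GRing.Theory Num.Theory.
Local Open Scope ring_scope.

(* ||f||_{U^k}^{2^k} for f : F_p^n -> R, as the uniform average over
   x, h_1..h_k of prod_{w in {0,1}^k} f (x + sum_i w_i h_i). *)
Definition gowers_pow (R : realType) (p n k : nat) (f : 'rV['F_p]_n -> R) : R :=
  (\sum_(x : 'rV['F_p]_n) \sum_(h : {ffun 'I_k -> 'rV['F_p]_n})
      \prod_(w : {ffun 'I_k -> bool})
         f (x + \sum_(i < k) (if w i then h i else 0)))
  / (#|{: 'rV['F_p]_n}|%:R ^+ k.+1).

Definition gowers_U2 (R : realType) (p n : nat) (f : 'rV['F_p]_n -> R) : R :=
  Num.sqrt (Num.sqrt (gowers_pow 2 f)).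

From HB Require Import structures.
From mathcomp Require Import all_boot all_order all_algebra.
From mathcomp Require Import reals.
From mathcomp Require Import ring.
Import Order.TTheory GRing.Theory Num.Theory.
Local Open Scope ring_scope.
Set Implicit Arguments. Unset Strict Implicit. Unset Printing Implicit Defensive.

(* Expanding every factor of ||a + f||_{U^3}^8 as a + f writes it as a sum of
   2^8 Gowers inner products, one for each set S of vertices of the cube
   {0,1}^3 that carry f (the others carry a).  S = {} and S = {0,1}^3 give a^8
   and ||f||_{U^3}^8.  Any other term factors along h_3 into the two opposite
   faces h_3 = 0 and h_3 = 1.  If a face is mixed, Cauchy-Schwarz bounds the
   term by the root of the second moment of that face, and up to the symmetries
   of the square a mixed face is a power of a times the mean of f, the
   autocorrelation r(h_1) or r(h_1 + h_2), or a three-point correlation; all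
   their second moments are at most ||f||_{U^2}^2, because
   ||f||_{U^2}^4 = E_z r(z)^2.  If both faces are constant the term is
   a^4 ||f||_{U^2}^4.  Hence every cross term is at most ||f||_{U^2}.  Nothing
   about F_p^n beyond being a finite abelian group is used. *)

Section Average.
Variables (R : realFieldType) (V : finZmodType).
Implicit Types (F G : V -> R) (c : R).

Definition avg F : R := (\sum_x F x) / #|V|%:R.

Lemma card_finZmod_neq0 : #|V|%:R != 0 :> R.
Proof. by rewrite pnatr_eq0 -lt0n; apply/card_gt0P; exists 0. Qed.

Lemma eq_avg F G : F =1 G -> avg F = avg G.
Proof. by move=> FG; rewrite /avg (eq_bigr _ (fun x _ => FG x)). Qed.

Lemma avg_cst c : avg (fun=> c) = c.
Proof. by rewrite /avg sumr_const -[c *+ _]mulr_natr mulfK ?card_finZmod_neq0. Qed.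

Lemma avgD F G : avg (fun x => F x + G x) = avg F + avg G.
Proof. by rewrite /avg big_split mulrDl. Qed.

Lemma avgZl c F : avg (fun x => c * F x) = c * avg F.
Proof. by rewrite /avg -mulr_sumr mulrA. Qed.

Lemma avgZr c F : avg (fun x => F x * c) = avg F * c.
Proof. by rewrite /avg -mulr_suml mulrAC. Qed.

Lemma ler_avg F G : (forall x, F x <= G x) -> avg F <= avg G.
Proof.
move=> FG; rewrite ler_pM2r ?invr_gt0 ?lt0r ?card_finZmod_neq0 ?ler0n //.
exact: ler_sum.
Qed.

Lemma avg_ge0 F : (forall x, 0 <= F x) -> 0 <= avg F.
Proof. by move=> F_ge0; rewrite -(avg_cst 0); apply: ler_avg. Qed.

Lemma norm_avg_le F : `|avg F| <= avg (fun x => `|F x|).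
Proof.
rewrite normrM normfV normr_nat ler_pM2r ?invr_gt0 ?lt0r ?card_finZmod_neq0 ?ler0n //.
exact: ler_norm_sum.
Qed.

Lemma norm_avg_le1 F : (forall x, `|F x| <= 1) -> `|avg F| <= 1.
Proof.
by move=> F_le1; rewrite (le_trans (norm_avg_le F)) // -(avg_cst 1) ler_avg.
Qed.

Lemma avg_addr t F : avg (fun x => F (x + t)) = avg F.
Proof. by rewrite /avg [in RHS](reindex_inj (addIr t)). Qed.

Lemma avg_opp F : avg (fun x => F (- x)) = avg F.
Proof. by rewrite /avg [in RHS](reindex_inj oppr_inj). Qed.

Lemma avg_swap (F : V -> V -> R) :
  avg (fun x => avg (fun y => F x y)) = avg (fun y => avg (fun x => F x y)).
Proof. by rewrite /avg -!mulr_suml exchange_big. Qed.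

Lemma avg_mul F G : avg F * avg G = avg (fun x => avg (fun y => F x * G y)).
Proof. by rewrite -avgZr; apply: eq_avg => x; rewrite avgZl. Qed.

Lemma sqr_avg_le F : avg F ^+ 2 <= avg (fun x => F x ^+ 2).
Proof.
set m := avg F; rewrite -subr_ge0.
have -> : avg (fun x => F x ^+ 2) - m ^+ 2 = avg (fun x => (F x - m) ^+ 2).
  rewrite [RHS](eq_avg (G := fun x => F x ^+ 2 + (- (2 * m) * F x + m ^+ 2)));
    last by move=> x; ring.
  by rewrite avgD avgD avgZl avg_cst -/m; ring.
by apply: avg_ge0 => x; apply: sqr_ge0.
Qed.

Lemma sum_div_avg k (S : V -> R) :
  (\sum_x S x) / #|V|%:R ^+ k.+1 = avg (fun x => S x / #|V|%:R ^+ k).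
Proof. by rewrite /avg -mulr_suml exprSr invfM mulrA. Qed.

End Average.

Section AverageSqrt.
Variables (R : rcfType) (V : finZmodType).

Lemma ler_self_sqrtr (x : R) : 0 <= x <= 1 -> x <= Num.sqrt x.
Proof.
case/andP=> x_ge0 x_le1; rewrite -{1}(sqr_sqrtr x_ge0) expr2 ler_piMl ?sqrtr_ge0 //.
by rewrite -sqrtr1 ler_wsqrtr.
Qed.

Lemma norm_avg2_mul_le (B C : V -> V -> R) : (forall u v, `|C u v| <= 1) ->
  `|avg (fun u => avg (fun v => B u v * C u v))| <=
  Num.sqrt (avg (fun u => avg (fun v => B u v ^+ 2))).
Proof.
move=> C_le1; set X := avg (fun u => avg (fun v => `|B u v|)).
have X_ge0 : 0 <= X by do 2!apply: avg_ge0 => ?.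
apply: le_trans (_ : X <= _).
  apply: le_trans (norm_avg_le _) _; apply: ler_avg => u.
  apply: le_trans (norm_avg_le _) _; apply: ler_avg => v.
  by rewrite normrM ler_piMr.
rewrite -(ger0_norm X_ge0) -sqrtr_sqr ler_wsqrtr //.
apply: le_trans (sqr_avg_le _) _; apply: ler_avg => u.
apply: le_trans (sqr_avg_le _) _; apply: ler_avg => v.
by rewrite real_normK ?num_real.
Qed.

End AverageSqrt.

Section SmallFfun.
Variable T : finType.

Definition ffun2 (t1 t2 : T) : {ffun 'I_2 -> T} :=
  [ffun i => if val i == 0%N then t1 else t2].

Definition ffun3 (t1 t2 t3 : T) : {ffun 'I_3 -> T} :=
  [ffun i => if val i == 0%N then t1 else if val i == 1%N then t2 else t3].

Lemma ffun2_eta (w : {ffun 'I_2 -> T}) : ffun2 (w ord0) (w ord_max) = w.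
Proof.
by apply/ffunP => -[[|[|//]] lti]; rewrite ffunE /=; congr (w _); apply: val_inj.
Qed.

Lemma ffun3_eta (w : {ffun 'I_3 -> T}) :
  ffun3 (w ord0) (w (@Ordinal 3 1 isT)) (w ord_max) = w.
Proof.
by apply/ffunP => -[[|[|[|//]]] lti]; rewrite ffunE /=; congr (w _); apply: val_inj.
Qed.

Lemma ffun3_const (Q : Type) (S : {ffun {ffun 'I_3 -> T} -> Q}) (c : Q) :
  (forall t1 t2 t3, S (ffun3 t1 t2 t3) = c) -> S = [ffun=> c].
Proof. by move=> Sc; apply/ffunP => w; rewrite ffunE -(ffun3_eta w) Sc. Qed.

Lemma big_ffun2 (Q : Type) (idx : Q) (op : Monoid.com_law idx)
    (F : {ffun 'I_2 -> T} -> Q) :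
  \big[op/idx]_w F w = \big[op/idx]_t1 \big[op/idx]_t2 F (ffun2 t1 t2).
Proof.
rewrite pair_big (reindex (fun t : T * T => ffun2 t.1 t.2)) //.
exists (fun w : {ffun 'I_2 -> T} => (w ord0, w ord_max));
  [by move=> [t1 t2] _; rewrite !ffunE | move=> w _; exact: ffun2_eta].
Qed.

Lemma big_ffun3 (Q : Type) (idx : Q) (op : Monoid.com_law idx)
    (F : {ffun 'I_3 -> T} -> Q) :
  \big[op/idx]_w F w =
  \big[op/idx]_t1 \big[op/idx]_t2 \big[op/idx]_t3 F (ffun3 t1 t2 t3).
Proof.
under [RHS]eq_bigr do rewrite pair_big.
rewrite pair_big (reindex (fun t : T * (T * T) => ffun3 t.1 t.2.1 t.2.2)) //.
exists (fun w : {ffun 'I_3 -> T} => (w ord0, (w (@Ordinal 3 1 isT), w ord_max)));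
  [by move=> [t1 [t2 t3]] _; rewrite !ffunE | move=> w _; exact: ffun3_eta].
Qed.

End SmallFfun.

Section GowersInner.
Variables (R : realFieldType) (V : finZmodType).

Definition gowers_inner k (F : {ffun 'I_k -> bool} -> V -> R) : R :=
  (\sum_x \sum_(h : {ffun 'I_k -> V}) \prod_w
      F w (x + \sum_(i < k) (if w i then h i else 0))) / #|V|%:R ^+ k.+1.
Arguments gowers_inner : clear implicits.

Lemma eq_gowers_inner k (F G : {ffun 'I_k -> bool} -> V -> R) :
  (forall w x, F w x = G w x) -> gowers_inner k F = gowers_inner k G.
Proof.
move=> FG; rewrite /gowers_inner; congr (_ / _).
by do 2!apply: eq_bigr => ? _; apply: eq_bigr => w _; apply: FG.
Qed.

Lemma gowers_inner_cst k (c : R) : gowers_inner k (fun _ _ => c) = c ^+ (2 ^ k).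
Proof.
rewrite /gowers_inner prodr_const card_ffun card_bool card_ord !sumr_const.
rewrite card_ffun card_ord -mulrnA -[c ^+ _ *+ _]mulr_natr natrM natrX -exprSr.
by rewrite mulfK // expf_neq0 // card_finZmod_neq0.
Qed.

Lemma gowers_inner_addE k (F0 F1 : {ffun 'I_k -> bool} -> V -> R) :
  gowers_inner k (fun w x => F0 w x + F1 w x) =
  \sum_(S : {ffun {ffun 'I_k -> bool} -> bool})
     gowers_inner k (fun w => if S w then F1 w else F0 w).
Proof.
rewrite /gowers_inner -mulr_suml; congr (_ / _).
have prod_addE (y : {ffun 'I_k -> bool} -> V) :
    \prod_w (F0 w (y w) + F1 w (y w)) =
    \sum_(S : {ffun _ -> bool}) \prod_w (if S w then F1 w else F0 w) (y w).
  rewrite -(bigA_distr_bigA (fun w (b : bool) => (if b then F1 w else F0 w) (y w))).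
  by apply: eq_bigr => w _; rewrite big_bool addrC.
under eq_bigr => x _ do under eq_bigr => h _ do
  rewrite (prod_addE (fun w => x + \sum_(i < k) (if w i then h i else 0))).
by under eq_bigr do rewrite exchange_big; rewrite exchange_big.
Qed.

Definition face (A B C D : V -> R) (h1 h2 : V) : R :=
  avg (fun y => A y * B (y + h1) * C (y + h2) * D (y + h1 + h2)).

Lemma gowers_inner2_face (F : {ffun 'I_2 -> bool} -> V -> R) :
  gowers_inner 2 F = avg (fun h1 => avg (fun h2 =>
    face (F (ffun2 false false)) (F (ffun2 true false))
         (F (ffun2 false true)) (F (ffun2 true true)) h1 h2)).
Proof.
rewrite /gowers_inner sum_div_avg; under eq_avg do rewrite big_ffun2 sum_div_avg.
under eq_avg do under eq_avg do rewrite sum_div_avg expr0.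
rewrite avg_swap; apply: eq_avg => h1; rewrite avg_swap; apply: eq_avg => h2.
apply: eq_avg => x; rewrite divr1 big_ffun2 !big_bool !big_ord_recl !big_ord0 !ffunE /=.
by rewrite !addr0 !add0r !addrA; ring.
Qed.

Lemma gowers_inner3_faces (F : {ffun 'I_3 -> bool} -> V -> R) :
  gowers_inner 3 F = avg (fun h1 => avg (fun h2 =>
    face (F (ffun3 false false false)) (F (ffun3 true false false))
         (F (ffun3 false true false)) (F (ffun3 true true false)) h1 h2 *
    face (F (ffun3 false false true)) (F (ffun3 true false true))
         (F (ffun3 false true true)) (F (ffun3 true true true)) h1 h2)).
Proof.
rewrite /gowers_inner sum_div_avg; under eq_avg do rewrite big_ffun3 sum_div_avg.
under eq_avg do under eq_avg do rewrite sum_div_avg.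
under eq_avg do under eq_avg do under eq_avg do rewrite sum_div_avg expr0.
rewrite avg_swap; apply: eq_avg => h1; rewrite avg_swap; apply: eq_avg => h2.
rewrite {2}/face -avgZr; apply: eq_avg => x; rewrite /face -avgZl -[RHS](avg_addr x).
apply: eq_avg => h3; rewrite divr1 big_ffun3 !big_bool !big_ord_recl !big_ord0 !ffunE /=.
by rewrite !addr0 !add0r !addrA (addrC h3 x) !(addrAC _ h3); ring.
Qed.

End GowersInner.
Arguments gowers_inner {R V} k F.

Section Faces.
Variables (R : realFieldType) (V : finZmodType).
Implicit Types A B C D : V -> R.

Definition face_sq A B C D : R :=
  avg (fun h1 => avg (fun h2 => face A B C D h1 h2 ^+ 2)).

Lemma face_sq_swap A B C D : face_sq A B C D = face_sq A C B D.
Proof.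
rewrite /face_sq avg_swap; apply: eq_avg => h2; apply: eq_avg => h1.
by congr (_ ^+ 2); apply: eq_avg => y; rewrite (addrAC y h2 h1); ring.
Qed.

Lemma face_sq_flip A B C D : face_sq A B C D = face_sq B A D C.
Proof.
rewrite /face_sq -[LHS]avg_opp; apply: eq_avg => h1; apply: eq_avg => h2.
congr (_ ^+ 2); rewrite /face -(avg_addr h1); apply: eq_avg => y.
by rewrite addrK addrAC; ring.
Qed.

Lemma face_sq_scale_le A B C D (c : R) (G : V -> V -> R) : `|c| <= 1 ->
    (forall h1 h2, face A B C D h1 h2 = c * G h1 h2) ->
  face_sq A B C D <= avg (fun h1 => avg (fun h2 => G h1 h2 ^+ 2)).
Proof.
move=> c_le1 faceE; apply: ler_avg => h1; apply: ler_avg => h2.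
rewrite faceE exprMn ler_piMl ?sqr_ge0 //.
by rewrite -(real_normK (num_real c)) exprn_ile1.
Qed.

End Faces.

Section ConstantPlusBounded.
Variables (R : rcfType) (V : finZmodType) (f : V -> R) (a : R).
Hypotheses (f_le1 : forall x, `|f x| <= 1) (a_le1 : `|a| <= 1).
Local Notation U := (gowers_inner 2 (fun=> f)).

Definition autocorr (z : V) : R := avg (fun y => f y * f (y + z)).

Lemma avg_shift_autocorr x y : avg (fun h => f (x + h) * f (y + h)) = autocorr (y - x).
Proof.
rewrite /autocorr -[RHS](avg_addr x); apply: eq_avg => h.
by rewrite [h + x]addrC [x + h + _]addrC addrA subrK.
Qed.

Lemma autocorrN z : autocorr (- z) = autocorr z.
Proof.
by rewrite /autocorr -[LHS](avg_addr z); apply: eq_avg => y; rewrite addrK mulrC.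
Qed.

Lemma gowers2_face : U = avg (fun h1 => avg (fun h2 => face f f f f h1 h2)).
Proof. exact: gowers_inner2_face. Qed.

Lemma gowers2_autocorr : U = avg (fun z => autocorr z ^+ 2).
Proof.
rewrite gowers2_face; apply: eq_avg => z.
rewrite /face avg_swap expr2 {1}/autocorr -avgZr; apply: eq_avg => y.
have -> : autocorr z = avg (fun h => f (y + h) * f (y + z + h)).
  by rewrite avg_shift_autocorr addrAC subrr add0r.
by rewrite -avgZl; apply: eq_avg => h; ring.
Qed.

Lemma autocorr_le1 z : `|autocorr z| <= 1.
Proof. by apply: norm_avg_le1 => y; rewrite normrM mulr_ile1. Qed.

Lemma avg_autocorr : avg autocorr = avg f ^+ 2.
Proof.
rewrite /autocorr avg_swap expr2 -avgZr; apply: eq_avg => z; rewrite -avgZl.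
by rewrite -[in RHS](avg_addr z); apply: eq_avg => y; rewrite addrC mulrC.
Qed.

Lemma gowers2_ge0 : 0 <= U.
Proof. by rewrite gowers2_autocorr; apply: avg_ge0 => z; apply: sqr_ge0. Qed.

Lemma gowers2_le1 : U <= 1.
Proof.
rewrite gowers2_autocorr -(avg_cst V 1); apply: ler_avg => z.
by rewrite -(real_normK (num_real _)) exprn_ile1 ?autocorr_le1.
Qed.

Lemma gowers2_le_sqrt : U <= Num.sqrt U.
Proof. by rewrite ler_self_sqrtr // gowers2_ge0 gowers2_le1. Qed.

Lemma sqr_avg_le_sqrt_gowers2 : avg f ^+ 2 <= Num.sqrt U.
Proof.
rewrite -(ger0_norm (sqr_ge0 (avg f))) -sqrtr_sqr ler_wsqrtr //.
by rewrite -avg_autocorr gowers2_autocorr sqr_avg_le.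
Qed.

Definition triple_corr (h1 h2 : V) : R :=
  avg (fun y => f y * f (y + h1) * f (y + h2)).

Lemma avg_sqr_triple_corr :
  avg (fun h1 => avg (fun h2 => triple_corr h1 h2 ^+ 2)) =
  avg (fun x => avg (fun y => f x * f y * autocorr (y - x) ^+ 2)).
Proof.
transitivity (avg (fun h1 => avg (fun h2 => avg (fun x => avg (fun y =>
    f x * f y * (f (x + h1) * f (y + h1)) * (f (x + h2) * f (y + h2))))))).
  apply: eq_avg => h1; apply: eq_avg => h2; rewrite expr2 avg_mul.
  by apply: eq_avg => x; apply: eq_avg => y; ring.
under eq_avg => h1 do (under eq_avg => h2 do rewrite avg_swap; rewrite avg_swap).
rewrite avg_swap; apply: eq_avg => y.
under eq_avg => h1 do rewrite avg_swap.
rewrite avg_swap; apply: eq_avg => x.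
under eq_avg => h1 do rewrite avgZl.
by rewrite avgZr avgZl !avg_shift_autocorr -[x - y]opprB autocorrN; ring.
Qed.

Lemma avg_sqr_triple_corr_le : avg (fun h1 => avg (fun h2 => triple_corr h1 h2 ^+ 2)) <= U.
Proof.
rewrite avg_sqr_triple_corr gowers2_autocorr.
rewrite -[leRHS](avg_cst V); apply: ler_avg => x.
rewrite -[leRHS](avg_addr (- x)); apply: ler_avg => y.
rewrite (le_trans (ler_norm _)) // normrM (ger0_norm (sqr_ge0 _)) ler_piMl ?sqr_ge0 //.
by rewrite normrM mulr_ile1.
Qed.

Local Notation "'a" := (fun=> a).

Lemma face_sq_faaa_le : face_sq f 'a 'a 'a <= Num.sqrt U.
Proof.
apply: le_trans (face_sq_scale_le (c := a * a * a) (G := fun _ _ => avg f) _ _) _.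
- by rewrite !normrM !mulr_ile1 ?mulr_ge0.
- by move=> h1 h2; rewrite /face -avgZl; apply: eq_avg => y; ring.
- by rewrite !avg_cst sqr_avg_le_sqrt_gowers2.
Qed.

Lemma face_sq_ffaa_le : face_sq f f 'a 'a <= U.
Proof.
apply: le_trans (face_sq_scale_le (c := a * a) (G := fun h1 _ => autocorr h1) _ _) _.
- by rewrite normrM mulr_ile1.
- by move=> h1 h2; rewrite /face -avgZl; apply: eq_avg => y; ring.
- by under eq_avg do rewrite avg_cst; rewrite gowers2_autocorr.
Qed.

Lemma face_sq_faaf_le : face_sq f 'a 'a f <= U.
Proof.
apply: le_trans
  (face_sq_scale_le (c := a * a) (G := fun h1 h2 => autocorr (h1 + h2)) _ _) _.
- by rewrite normrM mulr_ile1.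
- by move=> h1 h2; rewrite /face -avgZl; apply: eq_avg => y; rewrite addrA; ring.
- rewrite gowers2_autocorr -[leRHS](avg_cst V); apply: ler_avg => h1.
  by rewrite -[leRHS](avg_addr h1); under eq_avg do rewrite addrC.
Qed.

Lemma face_sq_fffa_le : face_sq f f f 'a <= U.
Proof.
apply: le_trans (face_sq_scale_le (c := a) (G := triple_corr) _ _)
  avg_sqr_triple_corr_le => //.
by move=> h1 h2; rewrite /face -avgZl; apply: eq_avg => y; ring.
Qed.

Definition summand (b : bool) : V -> R := if b then f else 'a.

Lemma norm_summand_le1 b x : `|summand b x| <= 1.
Proof. by case: b. Qed.

Lemma norm_face_summand_le1 b00 b10 b01 b11 h1 h2 :
  `|face (summand b00) (summand b10) (summand b01) (summand b11) h1 h2| <= 1.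
Proof.
by apply: norm_avg_le1 => y; rewrite !normrM !mulr_ile1 ?mulr_ge0 ?norm_summand_le1.
Qed.

(* [face_sq_swap] and [face_sq_flip] generate the symmetries of the square, and
   every non-constant colouring of its corners is a symmetric image of one of
   the four colourings bounded above. *)
Lemma face_sq_mixed_le b00 b10 b01 b11 :
  ~~ [&& b10 == b00, b01 == b00 & b11 == b00] ->
  face_sq (summand b00) (summand b10) (summand b01) (summand b11) <= Num.sqrt U.
Proof.
have := face_sq_faaa_le; have := le_trans face_sq_ffaa_le gowers2_le_sqrt.
have := le_trans face_sq_faaf_le gowers2_le_sqrt.
have := le_trans face_sq_fffa_le gowers2_le_sqrt.
rewrite /summand; case: b00 b10 b01 b11 => [] [] [] [] //= *;
  first [ assumption
        | rewrite face_sq_flip; assumption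
        | rewrite face_sq_swap; assumption
        | rewrite face_sq_swap face_sq_flip; assumption
        | rewrite face_sq_flip face_sq_swap; assumption
        | rewrite face_sq_flip face_sq_swap face_sq_flip; assumption
        | rewrite face_sq_swap face_sq_flip face_sq_swap; assumption
        | rewrite face_sq_swap face_sq_flip face_sq_swap face_sq_flip; assumption ].
Qed.

Lemma avg_face_f_mul_face_a :
  avg (fun h1 => avg (fun h2 => face f f f f h1 h2 * face 'a 'a 'a 'a h1 h2)) =
  U * a ^+ 4.
Proof.
have face_a h1 h2 : face 'a 'a 'a 'a h1 h2 = a ^+ 4 by rewrite /face avg_cst; ring.
under eq_avg do under eq_avg do rewrite face_a.
by under eq_avg do rewrite avgZr; rewrite avgZr -gowers2_face.
Qed.

Lemma norm_gowers2_mul_a4_le : `|U * a ^+ 4| <= Num.sqrt (Num.sqrt U).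
Proof.
apply: le_trans (le_trans gowers2_le_sqrt (ler_wsqrtr gowers2_le_sqrt)).
by rewrite normrM ger0_norm ?gowers2_ge0 // ler_piMr ?gowers2_ge0 // normrX exprn_ile1.
Qed.

Lemma norm_avg_face_summand_mul_le (t : bool -> bool -> bool -> bool) :
    ~~ [forall i, forall j, forall k, t i j k] ->
    ~~ [forall i, forall j, forall k, ~~ t i j k] ->
  `|avg (fun h1 => avg (fun h2 =>
      face (summand (t false false false)) (summand (t true false false))
           (summand (t false true false)) (summand (t true true false)) h1 h2 *
      face (summand (t false false true)) (summand (t true false true))
           (summand (t false true true)) (summand (t true true true)) h1 h2))|
  <= Num.sqrt (Num.sqrt U).
Proof.
move=> t_not_true t_not_false.
have sqrt_face_le b00 b10 b01 b11 : ~~ [&& b10 == b00, b01 == b00 & b11 == b00] ->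
    Num.sqrt (face_sq (summand b00) (summand b10) (summand b01) (summand b11))
    <= Num.sqrt (Num.sqrt U).
  by move=> mixed; rewrite ler_wsqrtr ?face_sq_mixed_le.
have [bot_const | bot_mixed] := boolP [&& t true false false == t false false false,
    t false true false == t false false false & t true true false == t false false false];
  last first.
  apply: le_trans _ (sqrt_face_le _ _ _ _ bot_mixed).
  by apply: norm_avg2_mul_le => h1 h2; apply: norm_face_summand_le1.
have [top_const | top_mixed] := boolP [&& t true false true == t false false true,
    t false true true == t false false true & t true true true == t false false true];
  last first.
  under eq_avg do under eq_avg do rewrite mulrC.
  apply: le_trans _ (sqrt_face_le _ _ _ _ top_mixed).
  by apply: norm_avg2_mul_le => h1 h2; apply: norm_face_summand_le1.
case/and3P: bot_const => /eqP-bot10 /eqP-bot01 /eqP-bot11.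
case/and3P: top_const => /eqP-top10 /eqP-top01 /eqP-top11.
have t_face i j k : t i j k = t false false k.
  by case: i j k => [] [] [] //.
rewrite bot10 bot01 bot11 top10 top01 top11 /summand.
case E0: (t false false false); case E1: (t false false true) => /=.
- case/negP: t_not_true; apply/forallP => i; apply/forallP => j; apply/forallP => k.
  by rewrite t_face; case: k; rewrite ?E0 ?E1.
- by rewrite avg_face_f_mul_face_a norm_gowers2_mul_a4_le.
- under eq_avg do under eq_avg do rewrite mulrC.
  by rewrite avg_face_f_mul_face_a norm_gowers2_mul_a4_le.
- case/negP: t_not_false; apply/forallP => i; apply/forallP => j; apply/forallP => k.
  by rewrite t_face; case: k; rewrite ?E0 ?E1.
Qed.

Lemma norm_gowers_inner3_summand_le (S : {ffun {ffun 'I_3 -> bool} -> bool}) :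
    S != [ffun=> true] -> S != [ffun=> false] ->
  `|gowers_inner 3 (fun w => summand (S w))| <= Num.sqrt (Num.sqrt U).
Proof.
move=> S_neq_true S_neq_false; rewrite gowers_inner3_faces.
apply: (norm_avg_face_summand_mul_le (t := fun i j k => S (ffun3 i j k))).
- apply: contra S_neq_true => /forallP S_true; apply/eqP/ffun3_const => i j k.
  by move/forallP/(_ j)/forallP/(_ k): (S_true i).
- apply: contra S_neq_false => /forallP S_false; apply/eqP/ffun3_const => i j k.
  by apply/negbTE; move/forallP/(_ j)/forallP/(_ k): (S_false i).
Qed.

Lemma gowers3_add_cst_le :
  `|gowers_inner 3 (fun _ x => a + f x) - (a ^+ 8 + gowers_inner 3 (fun=> f))|
  <= 256%:R * Num.sqrt (Num.sqrt U).
Proof.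
have true_neq_false : [ffun=> true] != [ffun=> false] :> {ffun {ffun 'I_3 -> bool} -> bool}.
  by apply/eqP => /ffunP/(_ (ffun3 true true true)); rewrite !ffunE.
have all_f : gowers_inner 3 (fun w => summand ([ffun=> true] w)) = gowers_inner 3 (fun=> f).
  by apply: eq_gowers_inner => w x; rewrite ffunE.
have all_a : gowers_inner 3 (fun w => summand ([ffun=> false] w)) = a ^+ 8.
  by rewrite -(gowers_inner_cst V 3 a); apply: eq_gowers_inner => w x; rewrite ffunE.
rewrite (gowers_inner_addE (fun _ _ => a) (fun=> f)) (bigD1 [ffun=> true]) //.
rewrite (bigD1 [ffun=> false]) 1?eq_sym //= all_f all_a.
have addKE (x y z : R) : x + (y + z) - (y + x) = z by ring.
rewrite addKE.
have term_le S : (S != [ffun=> true]) && (S != [ffun=> false]) ->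
    `|gowers_inner 3 (fun w => summand (S w))| <= Num.sqrt (Num.sqrt U).
  by case/andP; apply: norm_gowers_inner3_summand_le.
rewrite (le_trans (ler_norm_sum _ _ _)) // (le_trans (ler_sum _ term_le)) //.
rewrite sumr_const -[_ *+ #|_|]mulr_natr mulrC.
rewrite ler_wpM2r ?sqrtr_ge0 // ler_nat (leq_trans (max_card _)) //.
by rewrite card_ffun card_bool card_ffun card_bool card_ord.
Qed.

End ConstantPlusBounded.

Lemma gowers_powE (R : realType) (p n k : nat) (f : 'rV['F_p]_n -> R) :
  gowers_pow k f = gowers_inner k (fun=> f).
Proof. by []. Qed.

Theorem theorem4p1 (R : realType) (p : nat) (hp : prime p) (hodd : odd p) :
  forall eps : R, 0 < eps ->
  exists c : R, 0 < c /\
    forall (n : nat) (f : 'rV['F_p]_n -> R) (a : R) (g : 'rV['F_p]_n -> R),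
      (forall x, -1 <= f x <= 1) ->
      gowers_U2 f <= c ->
      -1 <= a <= 1 ->
      (forall x, g x = a + f x) ->
      `| gowers_pow 3 g - (a ^+ 8 + gowers_pow 3 f) | <= eps.
Proof.
move=> eps eps_gt0; exists (eps / 256%:R); split; first by rewrite divr_gt0 ?ltr0n.
move=> n f a g f_bnd U2_le a_bnd gE.
have f_le1 x : `|f x| <= 1 by rewrite ler_norml f_bnd.
have a_le1 : `|a| <= 1 by rewrite ler_norml.
rewrite !gowers_powE (eq_gowers_inner (G := fun _ x => a + f x)) //.
apply: le_trans (gowers3_add_cst_le f_le1 a_le1) _.
by rewrite mulrC -ler_pdivlMr ?ltr0n.
Qed.
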